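(* Cut elimination preserves weak-regularity, regularity and finite expandability. Therefore, if $\mathcal{D}\in\mathsf{X}$ with $\mathsf{X}\in\{\mathsf{rPLL}_2^\infty,\mathsf{wrPLL}_2^\infty\}$ and $\mathcal{D} \to_{\mathsf{cut}} \mathcal{D}'$, then also $\mathcal{D}' \in \mathsf{X}$.
   Context: Formulas: $A ::= X \mid X^\perp \mid A\otimes A \mid A ⅋ A \mid {!A} \mid {?A} \mid \mathbf{1} \mid \bot \mid \forall X.A \mid \exists X.A$. $\mathsf{PLL}_2^\infty$: possibly infinite, finitely branching coderivations over axiom, cut, $\otimes$, $⅋$, $\mathbf{1}$, $\bot$, weakening $?\mathsf{w}$ (from $\Gamma$ infer $\Gamma,?A$), absorption $?\mathsf{b}$ (from $\Gamma,A,?A$ infer $\Gamma,?A$), $\forall$, $\exists$ (instantiating only $(!,?)$-free formulas), conditional promotion $\mathsf{cp}$ (from left premise $\Gamma,A$ and right premise $?\Gamma,!A$ infer $?\Gamma,!A$). Cut-elimination $\to_{\mathsf{cut}}$ consists of the standard multiplicative, second-order and commutative steps, plus exponential steps: a cut between two $\mathsf{cp}$ rules becomes a $\mathsf{cp}$ whose left premise is the cut of the two left premises and whose right premise is the cut of the two right premises; a cut between $\mathsf{cp}$ (conclusion $?\Gamma,!A$) and $?\mathsf{w}$ on $?A^\perp$ becomes $|\Gamma|$ weakenings; a cut between $\mathsf{cp}$ and $?\mathsf{b}$ (premise $\Delta,A^\perp,?A^\perp$) becomes cuts of the left premise $\Gamma,A$ against $A^\perp$ and of the right premise $?\Gamma,!A$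 against $?A^\perp$, followed by $|\Gamma|$ absorptions. A coderivation is regular if it has finitely many distinct sub-coderivations, weakly regular if it has finitely many distinct sub-coderivations whose conclusions are left premises of $\mathsf{cp}$ rules, finitely expandable if every branch contains finitely many cut and $?\mathsf{b}$ rules, and progressing if every infinite branch contains a $!$-thread (maximal upward sequence of $!$-formula occurrences) infinitely often in the conclusion of a $\mathsf{cp}$. $\mathsf{wrPLL}_2^\infty$ (resp. $\mathsf{rPLL}_2^\infty$) is the set of progressing, finitely expandable, weakly regular (resp. regular) coderivations. *)

From Stdlib Require Import Bool List Arith Lia Permutation.
Import ListNotations.

(* Formulas, locally nameless: free (named) second-order variables FVar x  *)
(* and their negations NFVar x; bound variables are de Bruijn (BVar/NBVar). *)
Inductive fml : Type :=
| FVar (x : nat) | NFVar (x : nat)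
| BVar (n : nat) | NBVar (n : nat)
| Tens (A B : fml) | Par (A B : fml)
| Oc (A : fml) | Wn (A : fml)
| One | Bot
| All (A : fml) | Ex (A : fml).

Fixpoint dual (A : fml) : fml :=
  match A with
  | FVar x => NFVar x | NFVar x => FVar x
  | BVar n => NBVar n | NBVar n => BVar n
  | Tens A B => Par (dual A) (dual B) | Par A B => Tens (dual A) (dual B)
  | Oc A => Wn (dual A) | Wn A => Oc (dual A)
  | One => Bot | Bot => One
  | All A => Ex (dual A) | Ex A => All (dual A)
  end.

Fixpoint open_rec (k : nat) (B : fml) (A : fml) : fml :=
  match A with
  | FVar x => FVar x | NFVar x => NFVar x
  | BVar n => if Nat.eqb n k then B else BVar n
  | NBVar n => if Nat.eqb n k then dual B else NBVar n
  | Tens A1 A2 => Tens (open_rec k B A1) (open_rec k B A2)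
  | Par A1 A2 => Par (open_rec k B A1) (open_rec k B A2)
  | Oc A1 => Oc (open_rec k B A1) | Wn A1 => Wn (open_rec k B A1)
  | One => One | Bot => Bot
  | All A1 => All (open_rec (S k) B A1) | Ex A1 => Ex (open_rec (S k) B A1)
  end.
Definition fopen (A B : fml) : fml := open_rec 0 B A.

Fixpoint lcb_at (k : nat) (A : fml) : bool :=
  match A with
  | FVar _ | NFVar _ | One | Bot => true
  | BVar n | NBVar n => Nat.ltb n k
  | Tens A1 A2 | Par A1 A2 => lcb_at k A1 && lcb_at k A2
  | Oc A1 | Wn A1 => lcb_at k A1
  | All A1 | Ex A1 => lcb_at (S k) A1
  end.
Definition lc (A : fml) : Prop := lcb_at 0 A = true.

Fixpoint fv (A : fml) : list nat :=
  match A with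
  | FVar x | NFVar x => [x]
  | BVar _ | NBVar _ | One | Bot => []
  | Tens A1 A2 | Par A1 A2 => fv A1 ++ fv A2
  | Oc A1 | Wn A1 | All A1 | Ex A1 => fv A1
  end.

Fixpoint expfree (A : fml) : bool :=
  match A with
  | Oc _ | Wn _ => false
  | Tens A1 A2 | Par A1 A2 => expfree A1 && expfree A2
  | All A1 | Ex A1 => expfree A1
  | _ => true
  end.

Fixpoint fsubst (s : nat -> fml) (A : fml) : fml :=
  match A with
  | FVar x => s x | NFVar x => dual (s x)
  | BVar n => BVar n | NBVar n => NBVar n
  | Tens A1 A2 => Tens (fsubst s A1) (fsubst s A2)
  | Par A1 A2 => Par (fsubst s A1) (fsubst s A2)
  | Oc A1 => Oc (fsubst s A1) | Wn A1 => Wn (fsubst s A1)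
  | One => One | Bot => Bot
  | All A1 => All (fsubst s A1) | Ex A1 => Ex (fsubst s A1)
  end.

Definition upd (s : nat -> fml) (y : nat) (F : fml) : nat -> fml :=
  fun x => if Nat.eqb x y then F else s x.

(* Sequents are lists read up to permutation (multisets).                  *)
(* Rule labels carry the index k of the principal formula in the           *)
(* conclusion and masks m splitting the context between two premises.      *)
Inductive rule : Type :=
| RAx (A : fml)
| RCut (A : fml) (m : list bool) (* premises  G_m, A  and  G_~m, A^perp *)
| RTens (k : nat) (m : list bool)
| RPar (k : nat)
| ROne
| RBot (k : nat)
| RWk (k : nat)
| RAbs (k : nat)                 (* ?b : from G, A, ?A infer G, ?A *)
| RAll (k : nat) (y : nat)       (* eigenvariable y *)
| REx (k : nat) (B : fml)        (* witness B, (!,?)-free *)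
| RCp (k : nat).                 (* conditional promotion: premises [G, A ; ?G, !A] *)

Fixpoint sel {T} (m : list bool) (l : list T) : list T :=
  match m, l with
  | b :: m', x :: l' => if b then x :: sel m' l' else sel m' l'
  | _, _ => []
  end.

(* index in l of the j-th element of sel m l *)
Fixpoint selidx (m : list bool) (j : nat) : nat :=
  match m with
  | [] => 0
  | b :: m' => if b then (match j with 0 => 0 | S j' => S (selidx m' j') end)
               else S (selidx m' j)
  end.

Fixpoint rm {T} (k : nat) (l : list T) : list T :=
  match l, k with
  | [], _ => []
  | _ :: l', 0 => l'
  | x :: l', S k' => x :: rm k' l'
  end.

Definition rmidx (k j : nat) : nat := if Nat.ltb j k then j else S j.

Fixpoint unwn (l : list fml) : option (list fml) :=
  match l with
  | [] => Some []
  | Wn A :: l' => match unwn l' with Some d => Some (A :: d) | None => None end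
  | _ => None
  end.

Definition arity (r : rule) : nat :=
  match r with
  | RAx _ | ROne => 0
  | RCut _ _ | RTens _ _ | RCp _ => 2
  | _ => 1
  end.

Definition princ (r : rule) : option nat :=
  match r with
  | RAx _ | ROne | RCut _ _ => None
  | RTens k _ | RPar k | RBot k | RWk k | RAbs k | RAll k _ | REx k _ | RCp k => Some k
  end.

(* premise patterns (up to permutation) of rule r with conclusion G *)
Definition pats (r : rule) (G : list fml) : option (list (list fml)) :=
  match r with
  | RAx _ => Some []
  | RCut A m =>
      if Nat.eqb (length m) (length G)
      then Some [sel m G ++ [A]; sel (map negb m) G ++ [dual A]] else None
  | RTens k m =>
      match nth_error G k with
      | Some (Tens A B) =>
          if Nat.eqb (length m) (length (rm k G))
          then Some [sel m (rm k G) ++ [A]; sel (map negb m) (rm k G) ++ [B]]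
          else None
      | _ => None end
  | RPar k => match nth_error G k with
              | Some (Par A B) => Some [rm k G ++ [A; B]] | _ => None end
  | ROne => match G with [One] => Some [] | _ => None end
  | RBot k => match nth_error G k with Some Bot => Some [rm k G] | _ => None end
  | RWk k => match nth_error G k with Some (Wn _) => Some [rm k G] | _ => None end
  | RAbs k => match nth_error G k with
              | Some (Wn A) => Some [rm k G ++ [A; Wn A]] | _ => None end
  | RAll k y => match nth_error G k with
                | Some (All A) =>
                    if existsb (fun F => existsb (Nat.eqb y) (fv F)) G then None
                    else Some [rm k G ++ [fopen A (FVar y)]]
                | _ => None end
  | REx k B => match nth_error G k with
               | Some (Ex A) =>
                   if expfree B && lcb_at 0 B then Some [rm k G ++ [fopen A B]]
                   else None
               | _ => None end
  | RCp k => match nth_error G k with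
             | Some (Oc A) =>
                 match unwn (rm k G) with
                 | Some D => Some [D ++ [A]; G] | None => None end
             | _ => None end
  end.

(* immediate ancestry: index j of pattern i is an immediate ancestor of the
   conclusion occurrence returned (None: no descendant, i.e. cut formulas) *)
Definition pa (r : rule) (G : list fml) (i j : nat) : option nat :=
  match r with
  | RAx _ | ROne => None
  | RCut _ m =>
      let mi := if Nat.eqb i 0 then m else map negb m in
      if Nat.ltb j (length (sel mi G)) then Some (selidx mi j) else None
  | RTens k m =>
      let mi := if Nat.eqb i 0 then m else map negb m in
      if Nat.ltb j (length (sel mi (rm k G))) then Some (rmidx k (selidx mi j))
      else Some k
  | RCp k =>
      if Nat.eqb i 0
      then (if Nat.ltb j (length G - 1) then Some (rmidx k j) else Some k)
      else Some j
  | RPar k | RBot k | RWk k | RAbs k | RAll k _ | REx k _ =>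
      if Nat.ltb j (length G - 1) then Some (rmidx k j) else Some k
  end.

Definition rule_ok (r : rule) (G : list fml) (Ps : list (list fml)) : Prop :=
  (match r with RAx A => Permutation G [A; dual A] | _ => True end) /\
  exists ps, pats r G = Some ps /\ Forall2 (@Permutation fml) Ps ps.

(* Coderivations: possibly infinite trees, addressed by positions.         *)
Definition tree := list nat -> option (rule * list fml).

Definition concl_at (D : tree) (p : list nat) : list fml :=
  match D p with Some (_, G) => G | None => [] end.

Definition coderiv (D : tree) : Prop :=
  D [] <> None /\
  (forall p i, D p = None -> D (p ++ [i]) = None) /\
  (forall p r G, D p = Some (r, G) ->
     Forall lc G /\
     (forall i, i < arity r <-> D (p ++ [i]) <> None) /\
     rule_ok r G (map (fun i => concl_at D (p ++ [i])) (seq 0 (arity r)))).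

Definition sub (D : tree) (p : list nat) : tree := fun q => D (p ++ q).

Definition mk (n : rule * list fml) (cs : list tree) : tree :=
  fun p => match p with
           | [] => Some n
           | i :: q => match nth_error cs i with Some c => c q | None => None end
           end.

Definition pref (b : nat -> nat) (n : nat) : list nat := map b (seq 0 n).
Definition infbranch (D : tree) (b : nat -> nat) : Prop :=
  forall n, D (pref b n) <> None.

Definition regular (D : tree) : Prop :=
  exists S : list tree, forall p, D p <> None -> In (sub D p) S.

Definition weakly_regular (D : tree) : Prop :=
  exists S : list tree, forall p k G, D p = Some (RCp k, G) -> In (sub D (p ++ [0])) S.

Definition finitely_expandable (D : tree) : Prop :=
  forall b, infbranch D b ->
    exists N, forall n, N <= n ->
      match D (pref b n) with
      | Some (RCut _ _, _) | Some (RAbs _, _) => False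
      | _ => True
      end.

(* occurrences: a witness that the premise i is the permutation s of pattern i *)
Definition perm_witness (P pat : list fml) (s : nat -> nat) : Prop :=
  length P = length pat /\
  (forall j, j < length P -> s j < length pat /\ nth j P One = nth (s j) pat One) /\
  (forall j j', j < length P -> j' < length P -> s j = s j' -> j = j').

Definition local_ok (D : tree) (p : list nat) (w : nat -> nat -> nat) : Prop :=
  match D p with
  | Some (r, G) =>
      forall i ps, pats r G = Some ps -> i < arity r ->
        exists pat, nth_error ps i = Some pat /\
                    perm_witness (concl_at D (p ++ [i])) pat (w i)
  | None => True
  end.

Definition anc (D : tree) (W : list nat -> nat -> nat -> nat)
  (p : list nat) (i j : nat) : option nat :=
  match D p with Some (r, G) => pa r G i (W p i j) | None => None end.

Definition is_oc (F : fml) : Prop := match F with Oc _ => True | _ => False end.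

(* every infinite branch has a !-thread that is infinitely often the principal
   formula in the conclusion of a cp rule *)
Definition progressing (D : tree) : Prop :=
  exists W : list nat -> nat -> nat -> nat,
    (forall p, local_ok D p (W p)) /\
    forall b, infbranch D b ->
      exists n0 (f : nat -> nat),
        (forall n, n0 <= n ->
           f n < length (concl_at D (pref b n)) /\
           is_oc (nth (f n) (concl_at D (pref b n)) One) /\
           anc D W (pref b n) (b n) (f (S n)) = Some (f n)) /\
        (forall N, exists n, N <= n /\ exists G, D (pref b n) = Some (RCp (f n), G)).

Definition wrPLL (D : tree) : Prop :=
  coderiv D /\ progressing D /\ finitely_expandable D /\ weakly_regular D.
Definition rPLL (D : tree) : Prop :=
  coderiv D /\ progressing D /\ finitely_expandable D /\ regular D.

(* E is a cut on A between X (containing A) and Y (containing A^perp) *)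
Definition is_cut (E : tree) (A : fml) (X Y : tree) : Prop :=
  exists m G, E = mk (RCut A m, G) [X; Y] \/ E = mk (RCut (dual A) m, G) [Y; X].

Fixpoint wk_chain (n : nat) (E Z : tree) : Prop :=
  match n with
  | 0 => E = Z
  | S n' => exists k G E1, E = mk (RWk k, G) [E1] /\ wk_chain n' E1 Z
  end.

Fixpoint abs_chain (n : nat) (E Z : tree) : Prop :=
  match n with
  | 0 => E = Z
  | S n' => exists k G E1, E = mk (RAbs k, G) [E1] /\ abs_chain n' E1 Z
  end.

(* substitution of free variables along a coderivation; above an ∀ rule with
   eigenvariable y the variable y is no longer substituted (it is rebound) *)
Definition rule_inst (s : nat -> fml) (r r' : rule) (s' : nat -> fml) : Prop :=
  match r with
  | RAx A => r' = RAx (fsubst s A) /\ s' = s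
  | RCut A m => r' = RCut (fsubst s A) m /\ s' = s
  | REx k B => r' = REx k (fsubst s B) /\ s' = s
  | RAll k y => r' = r /\ s' = upd s y (FVar y)
  | _ => r' = r /\ s' = s
  end.

Definition tsubst_rel (D E : tree) (s0 : nat -> fml) : Prop :=
  exists rho : list nat -> nat -> fml, rho [] = s0 /\
    forall p, match D p, E p with
              | None, None => True
              | Some (r, G), Some (r', G') =>
                  G' = map (fsubst (rho p)) G /\
                  forall i, rule_inst (rho p) r r' (rho (p ++ [i]))
              | _, _ => False
              end.

Definition nonprincipal (r : rule) (G : list fml) (A : fml) : Prop :=
  match princ r with
  | Some k => exists j, j <> k /\ nth_error G j = Some A
  | None => True
  end.

(* commutative steps: the rule r' below replaces r, s renames the eigenvariable *)
Definition comm_kind (r r' : rule) (s : nat -> fml) : Prop :=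
  match r with
  | RCut A _ => (exists m', r' = RCut A m') /\ s = FVar
  | RTens _ _ => (exists k' m', r' = RTens k' m') /\ s = FVar
  | RPar _ => (exists k', r' = RPar k') /\ s = FVar
  | RBot _ => (exists k', r' = RBot k') /\ s = FVar
  | RWk _ => (exists k', r' = RWk k') /\ s = FVar
  | RAbs _ => (exists k', r' = RAbs k') /\ s = FVar
  | REx _ B => (exists k', r' = REx k' B) /\ s = FVar
  | RAll _ y => exists k' y', r' = RAll k' y' /\ s = upd FVar y (FVar y')
  | _ => False
  end.

Definition root_red (D D' : tree) : Prop :=
  (exists A X Y A0 G0, is_cut D A X Y /\ X = mk (RAx A0, G0) [] /\ D' = Y)
  \/ (exists A B X Y X1 X2 Y1 k mx GX k' GY E,
        is_cut D (Tens A B) X Y /\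
        X = mk (RTens k mx, GX) [X1; X2] /\ nth_error GX k = Some (Tens A B) /\
        Y = mk (RPar k', GY) [Y1] /\ nth_error GY k' = Some (Par (dual A) (dual B)) /\
        is_cut D' B X2 E /\ is_cut E A X1 Y1)
  \/ (exists X Y k GY Y1,
        is_cut D One X Y /\ X = mk (ROne, [One]) [] /\
        Y = mk (RBot k, GY) [Y1] /\ D' = Y1)
  \/ (exists A B X Y X1 Y1 k y GX k' GY X1',
        is_cut D (All A) X Y /\
        X = mk (RAll k y, GX) [X1] /\ nth_error GX k = Some (All A) /\
        Y = mk (REx k' B, GY) [Y1] /\ nth_error GY k' = Some (Ex (dual A)) /\
        tsubst_rel X1 X1' (upd FVar y B) /\ is_cut D' (fopen A B) X1' Y1)
  \/ (exists A X Y XL XR YL YR k GX k' GY k'' G' E1 E2,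
        is_cut D (Oc A) X Y /\
        X = mk (RCp k, GX) [XL; XR] /\ nth_error GX k = Some (Oc A) /\
        Y = mk (RCp k', GY) [YL; YR] /\
        D' = mk (RCp k'', G') [E1; E2] /\ is_cut E1 A XL YL /\ is_cut E2 (Oc A) XR YR)
  \/ (exists A X Y XL XR k GX k' GY Y1,
        is_cut D (Oc A) X Y /\
        X = mk (RCp k, GX) [XL; XR] /\ nth_error GX k = Some (Oc A) /\
        Y = mk (RWk k', GY) [Y1] /\ nth_error GY k' = Some (Wn (dual A)) /\
        wk_chain (length GX - 1) D' Y1)
  \/ (exists A X Y XL XR k GX k' GY Y1 E,
        is_cut D (Oc A) X Y /\
        X = mk (RCp k, GX) [XL; XR] /\ nth_error GX k = Some (Oc A) /\
        Y = mk (RAbs k', GY) [Y1] /\ nth_error GY k' = Some (Wn (dual A)) /\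
        abs_chain (length GX - 1) D' E /\
        ((exists E0, is_cut E0 (Oc A) XR Y1 /\ is_cut E A XL E0) \/
         (exists E0, is_cut E0 A XL Y1 /\ is_cut E (Oc A) XR E0)))
  \/ (exists A X Y r GX Xs r' G' Es i Xi Xi' Ei s,
        is_cut D A X Y /\ X = mk (r, GX) Xs /\ nonprincipal r GX A /\
        comm_kind r r' s /\ D' = mk (r', G') Es /\
        length Es = length Xs /\
        nth_error Xs i = Some Xi /\ nth_error Es i = Some Ei /\
        (forall j, j <> i -> nth_error Es j = nth_error Xs j) /\
        tsubst_rel Xi Xi' s /\ is_cut Ei A Xi' Y).

Definition cut_step (D D' : tree) : Prop :=
  coderiv D /\ coderiv D' /\
  exists p, D p <> None /\
    (forall q, (forall r, q <> p ++ r) -> D' q = D q) /\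
    Permutation (concl_at D p) (concl_at D' p) /\
    root_red (sub D p) (sub D' p).

From Stdlib Require Import Bool List Arith Lia Permutation.
From Stdlib Require Import FunctionalExtensionality IndefiniteDescription.
Import ListNotations.

(* A cut-reduction step at position p leaves the coderivation unchanged away from p,
   and below p the reduct consists of finitely many new rule instances on top of
   subtrees of the redex, each instantiated by at most one substitution [y := B]
   (the forall/exists step, or the eigenvariable renaming of a commutative step).
   Pushed up a coderivation, such a substitution is only changed by rebinding the
   eigenvariables of forall rules, so at every node it is either the identity or
   [y := B] itself.  Hence the reduct has only finitely many new subtrees (regularity,
   weak regularity), and every infinite branch of the reduct eventually runs through
   instances of the nodes of an infinite branch of the original.  Instantiation keeps
   rule kinds, !-formulas and the ancestry relation, so cut- and ?b-free tails
   (finite expandability) and progressing !-threads carry over. *)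

(** * Formulas and rule instances *)

Lemma dual_involutive A : dual (dual A) = A.
Proof. induction A; simpl; congruence. Qed.

Lemma fsubst_dual s A : fsubst s (dual A) = dual (fsubst s A).
Proof. induction A; simpl; try congruence. rewrite dual_involutive; auto. Qed.

Lemma fsubst_FVar A : fsubst FVar A = A.
Proof. induction A; simpl; congruence. Qed.

Lemma lcb_at_dual n A : lcb_at n (dual A) = lcb_at n A.
Proof. revert n; induction A; intros; simpl; auto; rewrite ?IHA1, ?IHA2; auto. Qed.

Lemma open_rec_lcb_at A d k C : lcb_at d A = true -> d <= k -> open_rec k C A = A.
Proof.
  revert d k; induction A; intros d k H Hk; simpl in *; auto;
  try (apply Nat.ltb_lt in H; destruct (Nat.eqb_spec n k); [lia|auto]);
  try (apply andb_true_iff in H as [H1 H2]; erewrite IHA1, IHA2; eauto);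
  try (erewrite IHA; eauto; lia).
Qed.

Definition subst_lc (s : nat -> fml) : Prop := forall x, lcb_at 0 (s x) = true.

Lemma fsubst_open_rec s A k B : subst_lc s ->
  fsubst s (open_rec k B A) = open_rec k (fsubst s B) (fsubst s A).
Proof.
  intro Hs; revert k; induction A; intros k; simpl; auto;
  try (rewrite IHA1, IHA2; auto); try (rewrite IHA; auto).
  - rewrite (open_rec_lcb_at _ 0); auto; lia.
  - rewrite (open_rec_lcb_at _ 0); rewrite ?lcb_at_dual; auto; lia.
  - destruct (Nat.eqb n k); auto.
  - destruct (Nat.eqb n k); simpl; auto. apply fsubst_dual.
Qed.

Lemma fsubst_upd_notin s y F A : ~ In y (fv A) -> fsubst (upd s y F) A = fsubst s A.
Proof.
  induction A; simpl; intros H; auto;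
  try (rewrite IHA1, IHA2; auto; intro; apply H; apply in_or_app; auto);
  try (rewrite IHA; auto);
  unfold upd; destruct (Nat.eqb_spec x y); subst; auto; exfalso; auto.
Qed.

Lemma upd_id s y : s y = FVar y -> upd s y (FVar y) = s.
Proof.
  intro H; apply functional_extensionality; intro x; unfold upd.
  destruct (Nat.eqb_spec x y); subst; auto.
Qed.

Definition id_or_upd (y : nat) (C : fml) (s : nat -> fml) : Prop :=
  s = FVar \/ s = upd FVar y C.

Lemma id_or_upd_rebind y C s z : id_or_upd y C s -> id_or_upd y C (upd s z (FVar z)).
Proof.
  intros [->| ->]; [left; apply upd_id; auto|].
  destruct (Nat.eqb_spec z y) as [->|Hzy].
  - left; apply functional_extensionality; intro x; unfold upd.
    destruct (Nat.eqb_spec x y); subst; auto.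
  - right; apply upd_id; unfold upd; apply Nat.eqb_neq in Hzy; rewrite Hzy; auto.
Qed.

Lemma id_or_upd_lc y C s : lcb_at 0 C = true -> id_or_upd y C s -> subst_lc s.
Proof. intros HC [->| ->] x; unfold upd; simpl; auto. destruct (Nat.eqb x y); auto. Qed.

Lemma sel_map {T U} (f : T -> U) m l : sel m (map f l) = map f (sel m l).
Proof.
  revert l; induction m as [|[] m IH]; intros [|x l]; simpl; rewrite ?IH; auto.
Qed.

Lemma rm_map {T U} (f : T -> U) k l : rm k (map f l) = map f (rm k l).
Proof. revert k; induction l as [|x l IH]; intros [|k]; simpl; rewrite ?IH; auto. Qed.

Lemma rm_In {T} k (l : list T) x : In x (rm k l) -> In x l.
Proof.
  revert k; induction l as [|y l IH]; intros [|k]; simpl; auto.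
  intros [H|H]; eauto.
Qed.

Lemma unwn_map_fsubst s l d :
  unwn l = Some d -> unwn (map (fsubst s) l) = Some (map (fsubst s) d).
Proof.
  revert d; induction l as [|[] l IH]; intros d H; simpl in *; try discriminate.
  - now inversion H.
  - destruct (unwn l); try discriminate. inversion H; subst. now rewrite (IH l0).
Qed.

Definition rule_fsubst (s : nat -> fml) (r : rule) : rule :=
  match r with
  | RAx A => RAx (fsubst s A)
  | RCut A m => RCut (fsubst s A) m
  | REx k B => REx k (fsubst s B)
  | _ => r
  end.

Definition premise_subst (s : nat -> fml) (o : option (rule * list fml)) : nat -> fml :=
  match o with Some (RAll _ y, _) => upd s y (FVar y) | _ => s end.

Lemma arity_rule_fsubst s r : arity (rule_fsubst s r) = arity r.
Proof. destruct r; auto. Qed.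

Lemma pa_rule_fsubst s r G i j : pa (rule_fsubst s r) (map (fsubst s) G) i j = pa r G i j.
Proof. destruct r; simpl; rewrite ?rm_map, ?sel_map, ?length_map; auto. Qed.

Lemma rule_fsubst_FVar r : rule_fsubst FVar r = r.
Proof. destruct r; simpl; rewrite ?fsubst_FVar; auto. Qed.

Lemma rule_fsubst_RCp s r k : rule_fsubst s r = RCp k -> r = RCp k.
Proof. destruct r; simpl; congruence. Qed.

Lemma pats_fsubst s r G ps ps' : subst_lc s ->
  pats r G = Some ps -> pats (rule_fsubst s r) (map (fsubst s) G) = Some ps' ->
  ps' = map (map (fsubst (premise_subst s (Some (r, G))))) ps.
Proof.
  intros Hs H1 H2; destruct r; simpl in *;
  try (destruct (nth_error G k) as [F|] eqn:E; [|discriminate];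
       rewrite (map_nth_error _ _ _ E) in H2; destruct F; try discriminate; simpl in * );
  rewrite ?rm_map, ?length_map in H2.
  5: destruct G as [|[] [|]]; simpl in *; try discriminate.
  all: try (destruct (unwn (rm k G)) as [d|] eqn:Eu; [|discriminate];
            rewrite (unwn_map_fsubst s _ _ Eu) in H2).
  all: try (destruct (Nat.eqb _ _); [|discriminate]).
  all: try (destruct (expfree B && lcb_at 0 B); [|discriminate];
            destruct (expfree (fsubst s B) && lcb_at 0 (fsubst s B)); [|discriminate]).
  all: try (inversion H1; inversion H2; subst; simpl; rewrite ?map_app, ?sel_map; simpl;
            rewrite ?fsubst_dual; unfold fopen; rewrite ?fsubst_open_rec; now auto).
  destruct (existsb _ G) eqn:Ey; [discriminate|].
  destruct (existsb _ (map (fsubst s) G)); [discriminate|].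
  assert (Hfresh : forall Z, In Z G -> ~ In y (fv Z)).
  { intros Z HZ Hy. apply not_true_iff_false in Ey. apply Ey, existsb_exists.
    exists Z; split; auto. apply existsb_exists. exists y; split; auto. apply Nat.eqb_refl. }
  inversion H1; inversion H2; subst; simpl. rewrite map_app. do 2 f_equal; simpl; [|f_equal].
  - apply map_ext_in; intros Z HZ. symmetry; rewrite fsubst_upd_notin; eauto using rm_In.
  - unfold fopen. rewrite fsubst_open_rec; simpl.
    + unfold upd at 1; rewrite Nat.eqb_refl, fsubst_upd_notin; auto.
      apply (Hfresh (All F)), (nth_error_In _ _ E).
    + intro x; unfold upd; destruct (Nat.eqb x y); auto.
Qed.

(** * Coderivations and their instances *)

Lemma perm_witness_of_Permutation P pat : Permutation P pat -> exists w, perm_witness P pat w.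
Proof.
  unfold perm_witness. induction 1 as [| x P pat _ [w [Hl [Hw Hi]]]
                                      | x y P
                                      | P Q R _ [w1 [Hl1 [Hw1 Hi1]]] _ [w2 [Hl2 [Hw2 Hi2]]]].
  - exists (fun j => j); simpl; split; [auto|split]; intros; simpl in *; lia.
  - exists (fun j => match j with 0 => 0 | S j => S (w j) end). simpl; split; [lia|split].
    + intros [|j] Hj; simpl; [split; auto; lia|]. destruct (Hw j); [lia|]. split; auto; lia.
    + intros [|j] [|j'] Hj Hj' E; auto; try discriminate. f_equal; apply Hi; lia.
  - exists (fun j => match j with 0 => 1 | 1 => 0 | j => j end). simpl; split; [lia|split].
    + intros [|[|j]] Hj; simpl; split; auto; lia.
    + intros [|[|j]] [|[|j']] Hj Hj' E; auto; try discriminate; lia.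
  - exists (fun j => w2 (w1 j)). split; [lia|split].
    + intros j Hj. destruct (Hw1 j Hj) as [A B]. destruct (Hw2 (w1 j)) as [C D]; [lia|].
      split; auto; congruence.
    + intros j j' Hj Hj' E. destruct (Hw1 j Hj), (Hw1 j' Hj'). apply Hi1, Hi2; auto; lia.
Qed.

Lemma nth_map_fsubst s l j : nth j (map (fsubst s) l) One = fsubst s (nth j l One).
Proof. change One with (fsubst s One) at 1. apply map_nth. Qed.

Lemma perm_witness_map s P pat w :
  perm_witness P pat w -> perm_witness (map (fsubst s) P) (map (fsubst s) pat) w.
Proof.
  unfold perm_witness; rewrite !length_map. intros [Hl [Hw Hi]]; repeat split; auto.
  - apply Hw; auto.
  - rewrite !nth_map_fsubst. f_equal; apply Hw; auto.
Qed.

Lemma is_oc_fsubst s A : is_oc A -> is_oc (fsubst s A).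
Proof. destruct A; simpl; auto; intros []. Qed.

Lemma sub_sub (T : tree) a b : sub (sub T a) b = sub T (a ++ b).
Proof. apply functional_extensionality; intro x; unfold sub; rewrite app_assoc; auto. Qed.

Lemma sub_mk_child (T : tree) n cs i c : T = mk n cs -> nth_error cs i = Some c -> c = sub T [i].
Proof.
  intros -> H; apply functional_extensionality; intro x; unfold sub, mk; simpl.
  rewrite H; auto.
Qed.

Lemma sub_root (T : tree) a n cs : sub T a = mk n cs -> T a = Some n.
Proof.
  intros E. generalize (f_equal (fun t => t []) E). unfold sub. rewrite app_nil_r. auto.
Qed.

Definition prefix_closed (T : tree) : Prop := forall q i, T q = None -> T (q ++ [i]) = None.

Lemma coderiv_prefix_closed D : coderiv D -> prefix_closed D.
Proof. intros [_ [H _]]; exact H. Qed.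

Lemma prefix_closed_sub T a : prefix_closed T -> prefix_closed (sub T a).
Proof. unfold prefix_closed, sub; intros H q i E. rewrite app_assoc; apply H; auto. Qed.

Lemma prefix_closed_defined T q r : prefix_closed T -> T (q ++ r) <> None -> T q <> None.
Proof.
  intros H Hqr Hq; apply Hqr. clear Hqr.
  induction r as [|i r IH] using rev_ind; [rewrite app_nil_r; auto|].
  rewrite app_assoc; apply H; auto.
Qed.

Lemma coderiv_pats D q r G : coderiv D -> D q = Some (r, G) -> exists ps, pats r G = Some ps.
Proof. intros (_ & _ & H3) E. destruct (H3 _ _ _ E) as (_ & _ & _ & ps & Hps & _); eauto. Qed.

(* [subst_at T s q] is the substitution reaching position [q] when [s] is pushed up [T]. *)
Fixpoint subst_at (T : tree) (s : nat -> fml) (q : list nat) : nat -> fml :=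
  match q with
  | [] => s
  | i :: q' => subst_at (sub T [i]) (premise_subst s (T [])) q'
  end.

Definition node_fsubst (s : nat -> fml) (o : option (rule * list fml)) : option (rule * list fml) :=
  match o with
  | Some (r, G) => Some (rule_fsubst s r, map (fsubst s) G)
  | None => None
  end.

Lemma node_fsubst_None s o : node_fsubst s o = None <-> o = None.
Proof. destruct o as [[r G]|]; simpl; split; congruence. Qed.

Lemma node_fsubst_FVar o : node_fsubst FVar o = o.
Proof.
  destruct o as [[r G]|]; simpl; auto.
  rewrite rule_fsubst_FVar, (map_ext _ id), map_id; auto. apply fsubst_FVar.
Qed.

Definition tinst (T : tree) (s : nat -> fml) : tree := fun q => node_fsubst (subst_at T s q) (T q).

Lemma subst_at_app T s q q' : subst_at T s (q ++ q') = subst_at (sub T q) (subst_at T s q) q'.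
Proof. revert T s; induction q as [|i q IH]; intros T s; simpl; auto. Qed.

Lemma subst_at_snoc T s q i : subst_at T s (q ++ [i]) = premise_subst (subst_at T s q) (T q).
Proof. rewrite subst_at_app; simpl. unfold sub; rewrite app_nil_r; auto. Qed.

Lemma sub_tinst T s q : sub (tinst T s) q = tinst (sub T q) (subst_at T s q).
Proof.
  apply functional_extensionality; intro r; unfold tinst, sub at 1.
  rewrite subst_at_app. reflexivity.
Qed.

Lemma tinst_None T s q : tinst T s q = None <-> T q = None.
Proof. apply node_fsubst_None. Qed.

Lemma tinst_Some T s q r G : tinst T s q = Some (r, G) ->
  exists r0 G0, T q = Some (r0, G0) /\
    r = rule_fsubst (subst_at T s q) r0 /\ G = map (fsubst (subst_at T s q)) G0.
Proof. unfold tinst, node_fsubst; destruct (T q) as [[r0 G0]|]; intro E; inversion E; eauto. Qed.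

Lemma concl_at_tinst T s q :
  concl_at (tinst T s) q = map (fsubst (subst_at T s q)) (concl_at T q).
Proof. unfold concl_at, tinst, node_fsubst. destruct (T q) as [[r G]|]; auto. Qed.

Lemma subst_at_id_or_upd y C T s q : id_or_upd y C s -> id_or_upd y C (subst_at T s q).
Proof.
  revert T s; induction q as [|i q IH]; intros T s Hs; simpl; auto.
  apply IH. unfold premise_subst. destruct (T []) as [[[] G]|]; auto.
  apply id_or_upd_rebind; auto.
Qed.

Lemma subst_at_FVar T q : subst_at T FVar q = FVar.
Proof.
  revert T; induction q as [|i q IH]; intros T; simpl; auto.
  unfold premise_subst. destruct (T []) as [[[] G]|]; auto. rewrite upd_id; auto.
Qed.

Lemma tinst_FVar T : tinst T FVar = T.
Proof.
  apply functional_extensionality; intro q.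
  unfold tinst. rewrite subst_at_FVar, node_fsubst_FVar; auto.
Qed.

Lemma tsubst_rel_tinst T E s : prefix_closed T -> tsubst_rel T E s -> E = tinst T s.
Proof.
  intros Hpc [rho [H0 H]].
  assert (Hrho : forall q, T q <> None -> rho q = subst_at T s q).
  { induction q as [|i q IH] using rev_ind; intros Hq; simpl; auto.
    assert (Tq : T q <> None) by (intro E0; apply Hq; apply Hpc; auto).
    rewrite subst_at_snoc, <- IH; auto.
    specialize (H q). destruct (T q) as [[r G]|]; [|congruence].
    destruct (E q) as [[r' G']|]; [|contradiction].
    destruct H as [_ H]. specialize (H i).
    destruct r; simpl in H; destruct H; auto. }
  apply functional_extensionality; intro q. unfold tinst.
  specialize (Hrho q). specialize (H q).
  destruct (T q) as [[r G]|]; destruct (E q) as [[r' G']|]; try contradiction; auto.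
  rewrite <- Hrho by congruence. destruct H as [-> H]. specialize (H 0).
  destruct r; simpl in H; destruct H; subst; auto.
Qed.

(** * The shape of a one-step reduct *)

(* A leaf at position [lpos] of the reduct is the subtree of the redex at [lsrc],
   instantiated by [lvar := lwit]. *)
Record leaf := Leaf { lpos : list nat; lsrc : list nat; lvar : nat; lwit : fml }.

Definition leaf_subst (l : leaf) : nat -> fml := upd FVar (lvar l) (lwit l).

Definition frontier (U T : tree) (H : list (list nat)) (L : list leaf) : Prop :=
  (forall r, T r <> None -> In r H \/ exists l r', In l L /\ r = lpos l ++ r') /\
  (forall l, In l L ->
     lcb_at 0 (lwit l) = true /\ sub T (lpos l) = tinst (sub U (lsrc l)) (leaf_subst l)).

Definition built_over (U T : tree) : Prop := exists H L, frontier U T H L.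

Lemma built_over_tinst U q y C :
  lcb_at 0 C = true -> built_over U (tinst (sub U q) (upd FVar y C)).
Proof.
  intros HC. exists [], [Leaf [] q y C]. split.
  - intros r _. right. exists (Leaf [] q y C), r. simpl; auto.
  - intros l [<-|[]]; simpl; auto.
Qed.

Lemma built_over_subtree U T q : T = sub U q -> built_over U T.
Proof.
  intros ->. rewrite <- (tinst_FVar (sub U q)), <- (upd_id FVar 0) by reflexivity.
  apply built_over_tinst; reflexivity.
Qed.

Definition shift_leaf (k : nat) (l : leaf) : leaf :=
  Leaf (k :: lpos l) (lsrc l) (lvar l) (lwit l).

Lemma built_over_children U cs k : (forall i c, nth_error cs i = Some c -> built_over U c) ->
  exists H L,
   (forall i c r, nth_error cs i = Some c -> c r <> None ->
      In ((k + i) :: r) H \/ exists l r', In l L /\ (k + i) :: r = lpos l ++ r') /\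
   (forall l, In l L -> lcb_at 0 (lwit l) = true /\ exists i c r0, lpos l = (k + i) :: r0 /\
      nth_error cs i = Some c /\ sub c r0 = tinst (sub U (lsrc l)) (leaf_subst l)).
Proof.
  revert k; induction cs as [|c cs IH]; intros k Hcs.
  - exists [], []; split; [intros [|i]; simpl; discriminate|intros _ []].
  - destruct (Hcs 0 c eq_refl) as [H1 [L1 [A1 B1]]].
    destruct (IH (S k)) as [H2 [L2 [A2 B2]]]; [intros i; apply (Hcs (S i))|].
    exists (map (cons k) H1 ++ H2), (map (shift_leaf k) L1 ++ L2). split.
    + intros [|i] c' r E Hr; simpl in E.
      * inversion E; subst. rewrite Nat.add_0_r.
        destruct (A1 r Hr) as [Hin|[l [r' [Hl ->]]]].
        -- left; apply in_or_app; left; apply in_map; auto.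
        -- right. exists (shift_leaf k l), r'. split; auto.
           apply in_or_app; left; apply in_map; auto.
      * rewrite <- Nat.add_succ_comm.
        destruct (A2 i c' r E Hr) as [Hin|[l [r' [Hl E']]]]; [left|right].
        -- apply in_or_app; right; auto.
        -- exists l, r'. split; auto. apply in_or_app; right; auto.
    + intros l Hl. apply in_app_or in Hl as [Hl|Hl].
      * apply in_map_iff in Hl as [l0 [<- Hl0]]. destruct (B1 l0 Hl0) as [HC E].
        split; auto. exists 0, c, (lpos l0). simpl. rewrite Nat.add_0_r; auto.
      * destruct (B2 l Hl) as [HC [i [c' [r0 [E1 [E2 E3]]]]]]. split; auto.
        exists (S i), c', r0. rewrite E1, Nat.add_succ_comm; auto.
Qed.

Lemma built_over_mk U n cs :
  (forall i c, nth_error cs i = Some c -> built_over U c) -> built_over U (mk n cs).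
Proof.
  intros Hcs. destruct (built_over_children U cs 0 Hcs) as [H [L [A B]]].
  exists ([] :: H), L. split.
  - intros [|i r] Hr; [left; simpl; auto|].
    simpl in Hr. destruct (nth_error cs i) as [c|] eqn:E; [|congruence].
    destruct (A i c r E Hr) as [Hin|Hl]; [left; simpl; auto|right; auto].
  - intros l Hl. destruct (B l Hl) as [HC [i [c [r0 [E1 [E2 E3]]]]]]. split; auto.
    rewrite E1, <- E3. apply functional_extensionality; intro x.
    unfold sub, mk; simpl. rewrite E2; auto.
Qed.

Ltac split_children := apply built_over_mk; intros [|[|[|?]]] ? Hchild; simpl in Hchild;
  try discriminate; injection Hchild; intros <-.

Lemma built_over_wk_chain U n E Z : wk_chain n E Z -> built_over U Z -> built_over U E.
Proof.
  revert E; induction n as [|n IH]; intros E HE HZ; simpl in HE; [subst; auto|].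
  destruct HE as [k [G [E1 [-> HE1]]]]. split_children. eauto.
Qed.

Lemma built_over_abs_chain U n E Z : abs_chain n E Z -> built_over U Z -> built_over U E.
Proof.
  revert E; induction n as [|n IH]; intros E HE HZ; simpl in HE; [subst; auto|].
  destruct HE as [k [G [E1 [-> HE1]]]]. split_children. eauto.
Qed.

Lemma built_over_cut U E A X Y :
  is_cut E A X Y -> built_over U X -> built_over U Y -> built_over U E.
Proof. intros [m [G [->| ->]]] HX HY; split_children; auto. Qed.

Lemma is_cut_subtrees U A X Y :
  is_cut U A X Y -> (exists a, X = sub U a) /\ (exists b, Y = sub U b).
Proof.
  intros [m [G [H|H]]]; split; [exists [0]|exists [1]|exists [1]|exists [0]];
    eapply sub_mk_child; eauto; reflexivity.
Qed.

Lemma sub_mk_child_sub U a X n cs i c :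
  X = sub U a -> X = mk n cs -> nth_error cs i = Some c -> c = sub U (a ++ [i]).
Proof. intros H1 H2 H3. rewrite (sub_mk_child _ _ _ _ _ H2 H3), H1, sub_sub; auto. Qed.

Ltac redex_subtree := eapply built_over_subtree; match goal with
  | Ha : ?X = sub ?U ?a, HX : ?X = mk _ _ |- _ =>
      first [ eapply (sub_mk_child_sub _ _ _ _ _ 0 _ Ha HX); reflexivity
            | eapply (sub_mk_child_sub _ _ _ _ _ 1 _ Ha HX); reflexivity
            | eapply (sub_mk_child_sub _ _ _ _ _ _ _ Ha HX); eassumption ]
  end.

Definition rules_wellformed (U : tree) : Prop :=
  forall q r G, U q = Some (r, G) -> exists ps, pats r G = Some ps.

Lemma built_over_tsubst U q Z y C : prefix_closed U -> lcb_at 0 C = true ->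
  tsubst_rel (sub U q) Z (upd FVar y C) -> built_over U Z.
Proof.
  intros Hpc HC Hts. rewrite (tsubst_rel_tinst _ _ _ (prefix_closed_sub _ q Hpc) Hts).
  apply built_over_tinst; auto.
Qed.

Lemma comm_kind_subst r r' s :
  comm_kind r r' s -> exists y C, lcb_at 0 C = true /\ s = upd FVar y C.
Proof.
  destruct r; simpl; try tauto;
    try (intros [_ ->]; exists 0, (FVar 0); rewrite upd_id; auto).
  intros [k' [y' [_ ->]]]; eexists _, (FVar y'); auto.
Qed.

Lemma root_red_built_over U T :
  prefix_closed U -> rules_wellformed U -> root_red U T -> built_over U T.
Proof.
  intros Hpc Hwf Hr.
  destruct Hr as [Hr|[Hr|[Hr|[Hr|[Hr|[Hr|[Hr|Hr]]]]]]].
  - destruct Hr as (A & X & Y & A0 & G0 & Hc & HX & ->).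
    destruct (is_cut_subtrees _ _ _ _ Hc) as [_ [b ->]]. eapply built_over_subtree; eauto.
  - destruct Hr as (A & B & X & Y & X1 & X2 & Y1 & k & mx & GX & k' & GY & E
                    & Hc & HX & _ & HY & _ & H1 & H2).
    destruct (is_cut_subtrees _ _ _ _ Hc) as [[a Ha] [b Hb]].
    eapply built_over_cut; eauto; [redex_subtree|].
    eapply built_over_cut; eauto; redex_subtree.
  - destruct Hr as (X & Y & k & GY & Y1 & Hc & HX & HY & ->).
    destruct (is_cut_subtrees _ _ _ _ Hc) as [[a Ha] [b Hb]]. redex_subtree.
  - destruct Hr as (A & B & X & Y & X1 & Y1 & k & y & GX & k' & GY & X1'
                    & Hc & HX & _ & HY & HGY & Hts & H2).
    destruct (is_cut_subtrees _ _ _ _ Hc) as [[a Ha] [b Hb]].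
    assert (HB : lcb_at 0 B = true).
    { rewrite Hb in HY. destruct (Hwf b _ _ (sub_root _ _ _ _ HY)) as [ps Hps].
      simpl in Hps. rewrite HGY in Hps.
      destruct (expfree B && lcb_at 0 B) eqn:EB; [|discriminate].
      apply andb_true_iff in EB; tauto. }
    eapply built_over_cut; eauto; [|redex_subtree].
    apply (built_over_tsubst U (a ++ [0]) _ y B); auto.
    erewrite <- sub_mk_child_sub; eauto; reflexivity.
  - destruct Hr as (A & X & Y & XL & XR & YL & YR & k & GX & k' & GY & k'' & G' & E1 & E2
                    & Hc & HX & _ & HY & -> & H1 & H2).
    destruct (is_cut_subtrees _ _ _ _ Hc) as [[a Ha] [b Hb]].
    split_children; (eapply built_over_cut; eauto; redex_subtree).
  - destruct Hr as (A & X & Y & XL & XR & k & GX & k' & GY & Y1 & Hc & HX & _ & HY & _ & Hw).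
    destruct (is_cut_subtrees _ _ _ _ Hc) as [[a Ha] [b Hb]].
    eapply built_over_wk_chain; eauto. redex_subtree.
  - destruct Hr as (A & X & Y & XL & XR & k & GX & k' & GY & Y1 & E
                    & Hc & HX & _ & HY & _ & Hw & Ho).
    destruct (is_cut_subtrees _ _ _ _ Hc) as [[a Ha] [b Hb]].
    eapply built_over_abs_chain; eauto.
    destruct Ho as [[E0 [H1 H2]]|[E0 [H1 H2]]];
      (eapply built_over_cut; eauto; [redex_subtree|];
       eapply built_over_cut; eauto; redex_subtree).
  - destruct Hr as (A & X & Y & r & GX & Xs & r' & G' & Es & i & Xi & Xi' & Ei & s
                    & Hc & HX & _ & Hck & -> & _ & HXi & HEi & Hoth & Hts & HE).
    destruct (is_cut_subtrees _ _ _ _ Hc) as [[a Ha] [b ->]].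
    apply built_over_mk. intros j c Hj.
    destruct (Nat.eq_dec j i) as [->|Hne].
    + rewrite HEi in Hj; injection Hj as <-.
      eapply built_over_cut; eauto; [|eapply built_over_subtree; eauto].
      destruct (comm_kind_subst _ _ _ Hck) as [y [C [HC ->]]].
      apply (built_over_tsubst U (a ++ [i]) _ y C); auto.
      erewrite <- sub_mk_child_sub; eauto.
    + rewrite Hoth in Hj; auto. redex_subtree.
Qed.

Lemma cut_step_frontier D D' : cut_step D D' ->
  exists p H L, coderiv D /\ coderiv D' /\
    (forall q, (forall r, q <> p ++ r) -> D' q = D q) /\ frontier (sub D p) (sub D' p) H L.
Proof.
  intros [HD [HD' [p [_ [Hout [_ Hr]]]]]].
  destruct (root_red_built_over (sub D p) (sub D' p)) as [H [L Hfr]]; auto.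
  - apply prefix_closed_sub, coderiv_prefix_closed; auto.
  - intros q r G E. exact (coderiv_pats D (p ++ q) r G HD E).
  - exists p, H, L. auto.
Qed.

(** * Positions and branches *)

Fixpoint prefixb (a q : list nat) : bool :=
  match a, q with
  | [], _ => true
  | x :: a', y :: q' => Nat.eqb x y && prefixb a' q'
  | _ :: _, [] => false
  end.

Lemma prefixb_spec a q : prefixb a q = true <-> exists t, q = a ++ t.
Proof.
  revert q; induction a as [|x a IH]; intros q; [simpl; split; eauto|].
  destruct q as [|y q]; simpl.
  - split; [discriminate|]. intros [t Ht]; discriminate.
  - rewrite andb_true_iff, IH, Nat.eqb_eq. split.
    + intros [-> [t ->]]; eauto.
    + intros [t Ht]; inversion Ht; subst; eauto.
Qed.

Lemma prefixb_app a q e : length a <= length q -> prefixb a (q ++ e) = prefixb a q.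
Proof.
  revert q; induction a as [|x a IH]; intros [|y q] Hl; simpl in *; auto; try lia.
  rewrite IH; auto; lia.
Qed.

Lemma not_prefix_app (p q : list nat) i : (forall r, q ++ [i] <> p ++ r) -> forall r, q <> p ++ r.
Proof. intros H r E. apply (H (r ++ [i])). rewrite E, app_assoc; auto. Qed.

Lemma prefix_trichotomy (p q : list nat) :
  (exists r, q = p ++ r) \/ (exists t, p = q ++ t) \/ (forall t u, q ++ t <> p ++ u).
Proof.
  destruct (prefixb p q) eqn:E1; [left; apply prefixb_spec; auto|].
  destruct (prefixb q p) eqn:E2; [right; left; apply prefixb_spec; auto|].
  right; right. intros t u E.
  apply app_eq_app in E as [l [[E3 _]|[E3 _]]].
  - assert (prefixb p q = true) by (apply prefixb_spec; eauto). congruence.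
  - assert (prefixb q p = true) by (apply prefixb_spec; eauto). congruence.
Qed.

Definition prefixes (p : list nat) : list (list nat) :=
  map (fun n => firstn n p) (seq 0 (S (length p))).

Lemma In_prefixes p t q : p = q ++ t -> In q (prefixes p).
Proof.
  intros ->. apply in_map_iff. exists (length q). split.
  - rewrite firstn_app, Nat.sub_diag, firstn_all; simpl; rewrite app_nil_r; auto.
  - apply in_seq. rewrite length_app; lia.
Qed.

Lemma pref_length b n : length (pref b n) = n.
Proof. unfold pref; rewrite length_map, length_seq; auto. Qed.

Lemma pref_add b n k : pref b (n + k) = pref b n ++ map b (seq n k).
Proof. unfold pref. rewrite seq_app, map_app; auto. Qed.

Lemma pref_S b n : pref b (S n) = pref b n ++ [b n].
Proof. rewrite <- Nat.add_1_r, pref_add; auto. Qed.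

Lemma branch_through_or_apart b (p : list nat) :
  pref b (length p) = p \/ (forall n r, pref b n <> p ++ r).
Proof.
  destruct (list_eq_dec Nat.eq_dec (pref b (length p)) p) as [|Hne]; auto.
  right. intros n r E.
  assert (Hn : length p <= n) by (rewrite <- (pref_length b n), E, length_app; lia).
  replace n with (length p + (n - length p)) in E by lia.
  rewrite pref_add in E. apply Hne.
  apply (f_equal (firstn (length p))) in E.
  rewrite !firstn_app, pref_length, !Nat.sub_diag, firstn_all2, firstn_all in E
    by (rewrite pref_length; lia).
  simpl in E; rewrite !app_nil_r in E; auto.
Qed.

Definition max_length (l : list (list nat)) : nat :=
  fold_right (fun x acc => Nat.max (length x) acc) 0 l.

Lemma max_length_In x l : In x l -> length x <= max_length l.
Proof.
  induction l as [|y l IH]; simpl; [intros []|]. intros [->|H]; [lia|]. specialize (IH H); lia.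
Qed.

Definition leaf_on (L : list leaf) (p q : list nat) : option leaf :=
  find (fun l => prefixb (p ++ lpos l) q) L.

Lemma leaf_on_Some L p q l : leaf_on L p q = Some l -> In l L /\ exists t, q = p ++ lpos l ++ t.
Proof.
  unfold leaf_on; intro E. apply find_some in E as [H1 H2].
  apply prefixb_spec in H2 as [t ->]. split; auto. exists t. rewrite app_assoc; auto.
Qed.

Lemma leaf_on_app L p q e : (forall l, In l L -> length (p ++ lpos l) <= length q) ->
  leaf_on L p (q ++ e) = leaf_on L p q.
Proof.
  unfold leaf_on. induction L as [|l L IH]; intros Hl; simpl; auto.
  rewrite prefixb_app by (apply Hl; simpl; auto). rewrite IH; auto.
  intros; apply Hl; simpl; auto.
Qed.

Definition graft (a : list nat) (m : nat) (b : nat -> nat) : nat -> nat :=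
  fun n => if n <? length a then nth n a 0 else b (n - length a + m).

Lemma graft_after a m b t : graft a m b (length a + t) = b (m + t).
Proof. unfold graft. destruct (Nat.ltb_spec (length a + t) (length a)); try lia. f_equal; lia. Qed.

Lemma pref_graft a m b t : pref (graft a m b) (length a + t) = a ++ map b (seq m t).
Proof.
  rewrite pref_add. f_equal.
  - apply nth_ext with (d := 0) (d' := 0); rewrite pref_length; auto.
    intros n Hn. unfold pref.
    rewrite nth_indep with (d' := graft a m b 0) by (rewrite length_map, length_seq; auto).
    rewrite map_nth, seq_nth by auto. simpl. unfold graft.
    destruct (Nat.ltb_spec n (length a)); [auto|lia].
  - unfold pref. apply nth_ext with (d := 0) (d' := 0); rewrite !length_map, !length_seq; auto.
    intros n Hn.
    rewrite nth_indep with (d' := graft a m b 0) by (rewrite length_map, length_seq; auto).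
    rewrite map_nth, seq_nth by auto.
    rewrite nth_indep with (d' := b 0) by (rewrite length_map, length_seq; auto).
    rewrite map_nth, seq_nth by auto. apply graft_after.
Qed.

Lemma Forall2_nth_error {A B} (R : A -> B -> Prop) l1 l2 i x :
  Forall2 R l1 l2 -> nth_error l1 i = Some x -> exists y, nth_error l2 i = Some y /\ R x y.
Proof.
  intros HF; revert i; induction HF as [|a b l1 l2 Hab HF IH]; intros [|i] E;
    simpl in *; try discriminate; [injection E as <-|]; eauto.
Qed.

Definition premise_witness (D : tree) (q : list nat) (i : nat) (w : nat -> nat) : Prop :=
  forall r G ps, D q = Some (r, G) -> pats r G = Some ps -> i < arity r ->
    exists pat, nth_error ps i = Some pat /\ perm_witness (concl_at D (q ++ [i])) pat w.

Lemma premise_witness_exists D q i : coderiv D -> exists w, premise_witness D q i w.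
Proof.
  intros (_ & _ & HD). destruct (D q) as [[r G]|] eqn:E.
  2: exists id; intros r G ps E'; congruence.
  destruct (HD _ _ _ E) as (_ & _ & _ & ps0 & Hps0 & HF2).
  destruct (lt_dec i (arity r)) as [Hi|Hi].
  2: exists id; intros r' G' ps E' _ Hi'; rewrite E in E'; injection E' as -> ->; lia.
  assert (Hn : nth_error (map (fun i => concl_at D (q ++ [i])) (seq 0 (arity r))) i
               = Some (concl_at D (q ++ [i])))
    by (rewrite nth_error_map, nth_error_seq; destruct (Nat.ltb_spec i (arity r)); auto; lia).
  destruct (Forall2_nth_error _ _ _ _ _ HF2 Hn) as [pat [Hpat Hperm]].
  destruct (perm_witness_of_Permutation _ _ Hperm) as [w Hw]. exists w.
  intros r' G' ps E' Hps _. rewrite E in E'; injection E' as -> ->.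
  rewrite Hps0 in Hps; injection Hps as <-. eauto.
Qed.

(* The witnesses [W] are transported into the leaves and reused away from [p];
   the premises whose conclusion changed get fresh witnesses [ch]. *)
Definition thread_witness (L : list leaf) (p : list nat) (W ch : list nat -> nat -> nat -> nat)
  : list nat -> nat -> nat -> nat :=
  fun q i => match leaf_on L p q with
  | Some l => W (p ++ lsrc l ++ skipn (length (p ++ lpos l)) q) i
  | None => if prefixb p (q ++ [i]) then ch q i else W q i
  end.

Definition cut_free_from (T : tree) (b : nat -> nat) (N : nat) : Prop :=
  forall n, N <= n ->
    match T (pref b n) with
    | Some (RCut _ _, _) | Some (RAbs _, _) => False
    | _ => True
    end.

Definition progressing_thread (T : tree) (W : list nat -> nat -> nat -> nat)
  (b : nat -> nat) (n0 : nat) (f : nat -> nat) : Prop :=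
  (forall n, n0 <= n ->
     f n < length (concl_at T (pref b n)) /\
     is_oc (nth (f n) (concl_at T (pref b n)) One) /\
     anc T W (pref b n) (b n) (f (S n)) = Some (f n)) /\
  (forall N, exists n, N <= n /\ exists G, T (pref b n) = Some (RCp (f n), G)).

Definition branch_image (T T' : tree) (b b' : nat -> nat) (k k' : nat) : Prop :=
  forall t, b' (k' + t) = b (k + t) /\
    exists s, T' (pref b' (k' + t)) = node_fsubst s (T (pref b (k + t))).

Section BranchImage.

Variables (T T' : tree) (b b' : nat -> nat) (k k' : nat).
Hypothesis image : branch_image T T' b b' k k'.

Lemma infbranch_image : prefix_closed T -> infbranch T' b' -> infbranch T b.
Proof.
  intros Hpc Hb' n.
  assert (Hk : forall t, T (pref b (k + t)) <> None).
  { intros t. destruct (image t) as [_ [s Es]]. rewrite <- (node_fsubst_None s), <- Es. apply Hb'. }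
  destruct (le_lt_dec k n) as [Hn|Hn].
  - replace n with (k + (n - k)) by lia. apply Hk.
  - specialize (Hk 0). rewrite Nat.add_0_r in Hk.
    replace k with (n + (k - n)) in Hk by lia. rewrite pref_add in Hk.
    eapply prefix_closed_defined; eauto.
Qed.

Lemma cut_free_from_image N : cut_free_from T b N -> cut_free_from T' b' (k' + N).
Proof.
  intros HN n Hn. replace n with (k' + (n - k')) by lia.
  destruct (image (n - k')) as [_ [s ->]].
  specialize (HN (k + (n - k')) ltac:(lia)).
  destruct (T (pref b (k + (n - k')))) as [[[] G]|]; simpl in *; auto.
Qed.

Lemma progressing_thread_image W W' n0 f :
  (forall t, W' (pref b' (k' + t)) (b' (k' + t)) = W (pref b (k + t)) (b (k + t))) ->
  progressing_thread T W b n0 f ->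
  progressing_thread T' W' b' (k' + n0) (fun n => f (n - k' + k)).
Proof.
  intros HW [Hthread Hcp]. split.
  - intros n Hn. replace n with (k' + (n - k')) by lia. set (t := n - k').
    replace (k' + t - k' + k) with (k + t) by lia.
    replace (S (k' + t) - k' + k) with (S (k + t)) by lia.
    destruct (image t) as [Eb [s Es]].
    destruct (Hthread (k + t) ltac:(lia)) as (H1 & H2 & H3).
    assert (Ec : concl_at T' (pref b' (k' + t)) = map (fsubst s) (concl_at T (pref b (k + t))))
      by (unfold concl_at; rewrite Es; destruct (T (pref b (k + t))) as [[r G]|]; auto).
    rewrite Ec, length_map, nth_map_fsubst. repeat split; auto using is_oc_fsubst.
    unfold anc in *. rewrite Es, <- HW, <- Eb in *.
    destruct (T (pref b (k + t))) as [[r G]|]; [|discriminate].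
    simpl. rewrite pa_rule_fsubst. exact H3.
  - intros N. destruct (Hcp (N + k)) as [n [Hn [G HG]]].
    exists (k' + (n - k)). split; [lia|].
    destruct (image (n - k)) as [_ [s Es]].
    replace (k + (n - k)) with n in Es by lia. rewrite Es, HG.
    replace (k' + (n - k) - k' + k) with n by lia. simpl. eexists; reflexivity.
Qed.

End BranchImage.

(** * Preservation by a cut step *)

Definition leaf_instances (S : list tree) (L : list leaf) : list tree :=
  flat_map (fun l => flat_map (fun T => [T; tinst T (leaf_subst l)]) S) L.

Lemma In_leaf_instances S L l T s :
  In l L -> In T S -> id_or_upd (lvar l) (lwit l) s -> In (tinst T s) (leaf_instances S L).
Proof.
  intros Hl HT Hs. apply in_flat_map. exists l; split; auto.
  apply in_flat_map. exists T; split; auto.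
  destruct Hs as [->| ->]; rewrite ?tinst_FVar; simpl; auto.
Qed.

Section CutStep.

Variables (D D' : tree) (p : list nat) (H : list (list nat)) (L : list leaf).
Hypothesis HD : coderiv D.
Hypothesis HD' : coderiv D'.
Hypothesis outside : forall q, (forall r, q <> p ++ r) -> D' q = D q.
Hypothesis below : frontier (sub D p) (sub D' p) H L.

Lemma reduct_below r : D' (p ++ r) <> None -> In r H \/ exists l r', In l L /\ r = lpos l ++ r'.
Proof. apply below. Qed.

Lemma leaf_wit_lc l : In l L -> lcb_at 0 (lwit l) = true.
Proof. apply below. Qed.

Lemma reduct_leaf l r :
  In l L -> D' (p ++ lpos l ++ r) = tinst (sub D (p ++ lsrc l)) (leaf_subst l) r.
Proof.
  intros Hl. destruct below as [_ B]. destruct (B l Hl) as [_ E].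
  rewrite !sub_sub in E. rewrite <- E. unfold sub. rewrite !app_assoc; auto.
Qed.

Lemma sub_reduct_leaf l r : In l L ->
  sub D' (p ++ lpos l ++ r)
  = tinst (sub D (p ++ lsrc l ++ r)) (subst_at (sub D (p ++ lsrc l)) (leaf_subst l) r).
Proof.
  intros Hl. rewrite app_assoc, <- sub_sub.
  replace (sub D' (p ++ lpos l)) with (tinst (sub D (p ++ lsrc l)) (leaf_subst l))
    by (apply functional_extensionality; intro x; unfold sub at 2;
        rewrite <- app_assoc, (reduct_leaf l x Hl); auto).
  rewrite sub_tinst, sub_sub, app_assoc; auto.
Qed.

Lemma leaf_subst_at_id_or_upd l T r : id_or_upd (lvar l) (lwit l) (subst_at T (leaf_subst l) r).
Proof. apply subst_at_id_or_upd. right; reflexivity. Qed.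

Lemma reduct_apart q : (forall t u, q ++ t <> p ++ u) -> sub D' q = sub D q.
Proof.
  intros Hq. apply functional_extensionality; intro x; unfold sub.
  apply outside. intros r E. apply (Hq x r); auto.
Qed.

Lemma reduct_apart_root q : (forall t u, q ++ t <> p ++ u) -> D' q = D q.
Proof.
  intros Hq. apply outside. intros r E. apply (Hq [] r). rewrite app_nil_r; auto.
Qed.

Lemma regular_step : regular D -> regular D'.
Proof.
  intros [S HS].
  exists (S ++ map (sub D') (prefixes p) ++ map (fun r => sub D' (p ++ r)) H
            ++ leaf_instances S L).
  intros q Hq. rewrite !in_app_iff.
  destruct (prefix_trichotomy p q) as [[r ->]|[[t Ht]|Hinc]].
  - destruct (reduct_below r Hq) as [Hin|[l [r' [Hl ->]]]].
    + right; right; left. apply in_map_iff; eauto.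
    + right; right; right. rewrite (sub_reduct_leaf l r') by auto.
      rewrite (reduct_leaf l r'), tinst_None in Hq by auto.
      apply (In_leaf_instances S L l); auto using leaf_subst_at_id_or_upd.
      apply HS. unfold sub in Hq; rewrite <- app_assoc in Hq. exact Hq.
  - right; left. apply in_map; eapply In_prefixes; eauto.
  - left. rewrite (reduct_apart q Hinc). apply HS. rewrite <- reduct_apart_root; auto.
Qed.

Lemma weakly_regular_step : weakly_regular D -> weakly_regular D'.
Proof.
  intros [S HS].
  exists (S ++ map (sub D') (prefixes p) ++ map (fun r => sub D' (p ++ r ++ [0])) H
            ++ leaf_instances S L).
  intros q k G Hq. rewrite !in_app_iff.
  destruct (prefixb p q) eqn:Epq.
  - apply prefixb_spec in Epq as [r ->].
    destruct (reduct_below r) as [Hin|[l [r' [Hl ->]]]]; [congruence| |].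
    + right; right; left. apply in_map_iff. exists r; rewrite app_assoc; auto.
    + right; right; right.
      rewrite (reduct_leaf l r') in Hq by auto.
      apply tinst_Some in Hq as (r0 & G0 & E1 & E2 & _).
      symmetry in E2; apply rule_fsubst_RCp in E2; subst r0.
      unfold sub in E1. rewrite <- app_assoc in E1.
      rewrite <- !app_assoc, (sub_reduct_leaf l (r' ++ [0])) by auto.
      apply (In_leaf_instances S L l); auto using leaf_subst_at_id_or_upd.
      rewrite !app_assoc in *. eapply HS; eauto.
  - assert (Nq : forall r, q <> p ++ r)
      by (intros r E; assert (prefixb p q = true) by (apply prefixb_spec; eauto); congruence).
    rewrite outside in Hq by auto.
    destruct (prefix_trichotomy p (q ++ [0])) as [[r Hr]|[[t Ht]|Hinc]].
    + destruct r as [|x r0] using rev_ind.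
      * right; left. apply in_map, (In_prefixes p []). rewrite app_nil_r in *; congruence.
      * rewrite app_assoc in Hr. apply app_inj_tail in Hr as [Hr _]. destruct (Nq _ Hr).
    + right; left. apply in_map; eapply In_prefixes; eauto.
    + left. rewrite (reduct_apart _ Hinc). eapply HS; eauto.
Qed.

Lemma branch_enters_leaf b : infbranch D' b -> pref b (length p) = p ->
  exists m l r', In l L /\ pref b m = p ++ lpos l ++ r' /\
    forall t, leaf_on L p (pref b (m + t)) = Some l.
Proof.
  intros Hb Hp.
  (* At depth [K] below [p] the branch is neither at a new node nor above a leaf. *)
  set (K := S (max_length H + max_length (map lpos L))).
  assert (Em : pref b (length p + K) = p ++ map b (seq (length p) K))
    by (rewrite pref_add, Hp; auto).
  assert (Hne : D' (p ++ map b (seq (length p) K)) <> None) by (rewrite <- Em; apply Hb).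
  destruct (reduct_below _ Hne) as [Hin|[l0 [r0 [Hl0 E0]]]].
  { apply max_length_In in Hin. rewrite length_map, length_seq in Hin. unfold K in Hin; lia. }
  destruct (leaf_on L p (pref b (length p + K))) as [l|] eqn:Eon.
  - destruct (leaf_on_Some _ _ _ _ Eon) as [Hl [t Ht]].
    exists (length p + K), l, t. repeat split; auto.
    intros t'. rewrite pref_add, leaf_on_app; auto.
    intros l' Hl'. rewrite pref_length, length_app.
    assert (length (lpos l') <= max_length (map lpos L)) by (apply max_length_In, in_map; auto).
    unfold K; lia.
  - exfalso. apply (find_none _ _ Eon) in Hl0. rewrite Em, E0, app_assoc in Hl0.
    assert (prefixb (p ++ lpos l0) ((p ++ lpos l0) ++ r0) = true) by (apply prefixb_spec; eauto).
    congruence.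
Qed.

Lemma reduct_branch_image W ch b : infbranch D' b ->
  exists b0 k k', branch_image D D' b0 b k k' /\
    forall t, thread_witness L p W ch (pref b (k' + t)) (b (k' + t))
              = W (pref b0 (k + t)) (b0 (k + t)).
Proof.
  intros Hb. destruct (branch_through_or_apart b p) as [Hp|Hapart].
  - destruct (branch_enters_leaf b Hb Hp) as (m & l & r' & Hl & Hm & Hon).
    set (a := p ++ lsrc l ++ r').
    exists (graft a m b), (length a), m.
    assert (Epref : forall t,
              pref (graft a m b) (length a + t) = (p ++ lsrc l) ++ r' ++ map b (seq m t))
      by (intros t; rewrite pref_graft; unfold a; rewrite !app_assoc; auto).
    assert (Eb : forall t, pref b (m + t) = p ++ lpos l ++ r' ++ map b (seq m t))
      by (intros t; rewrite pref_add, Hm, !app_assoc; auto).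
    split.
    + intros t. rewrite graft_after. split; auto.
      eexists. rewrite Eb, reduct_leaf, Epref by auto. reflexivity.
    + intros t. unfold thread_witness. rewrite Hon, graft_after, Epref, (Eb t) at 1.
      rewrite (app_assoc p (lpos l)), skipn_app, skipn_all, Nat.sub_diag, skipn_0.
      rewrite <- app_assoc. reflexivity.
  - assert (Eout : forall n, D' (pref b n) = D (pref b n))
      by (intros n; apply outside; intros r E; eapply Hapart; eauto).
    exists b, 0, 0. split.
    + intros t. split; auto. exists FVar. rewrite node_fsubst_FVar. apply Eout.
    + intros t. unfold thread_witness. simpl.
      destruct (leaf_on L p (pref b t)) as [l|] eqn:Eon.
      * destruct (leaf_on_Some _ _ _ _ Eon) as [_ [u Eu]]. exfalso; eapply Hapart; eauto.
      * destruct (prefixb p (pref b t ++ [b t])) eqn:Epb; auto.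
        apply prefixb_spec in Epb as [u Eu]. rewrite <- pref_S in Eu.
        exfalso; eapply Hapart; eauto.
Qed.

Lemma finitely_expandable_step : finitely_expandable D -> finitely_expandable D'.
Proof.
  intros HFE b Hb.
  destruct (reduct_branch_image (fun _ _ _ => 0) (fun _ _ _ => 0) b Hb)
    as (b0 & k & k' & Himg & _).
  destruct (HFE b0) as [N HN].
  { eapply infbranch_image; eauto using coderiv_prefix_closed. }
  exists (k' + N). eapply cut_free_from_image; eauto.
Qed.

Lemma local_ok_leaf W l t i r G ps : In l L -> (forall q, local_ok D q (W q)) ->
  D' (p ++ lpos l ++ t) = Some (r, G) -> pats r G = Some ps -> i < arity r ->
  exists pat, nth_error ps i = Some pat /\
    perm_witness (concl_at D' ((p ++ lpos l ++ t) ++ [i])) pat (W (p ++ lsrc l ++ t) i).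
Proof.
  intros Hl HW Eq Hps Hi.
  set (T := sub D (p ++ lsrc l)) in *. set (s := subst_at T (leaf_subst l) t).
  rewrite reduct_leaf in Eq by auto. fold T in Eq.
  apply tinst_Some in Eq as (r0 & G0 & E0 & -> & ->). fold s.
  assert (E0' : D (p ++ lsrc l ++ t) = Some (r0, G0))
    by (unfold T, sub in E0; rewrite app_assoc; auto).
  destruct (coderiv_pats _ _ _ _ HD E0') as [ps0 Hps0].
  assert (Hs : subst_lc s)
    by (apply (id_or_upd_lc (lvar l) (lwit l));
        [apply leaf_wit_lc|apply leaf_subst_at_id_or_upd]; auto).
  rewrite arity_rule_fsubst in Hi.
  specialize (HW (p ++ lsrc l ++ t)). unfold local_ok in HW. rewrite E0' in HW.
  destruct (HW i ps0 Hps0 Hi) as [pat [Hpat Hpw]].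
  exists (map (fsubst (premise_subst s (Some (r0, G0)))) pat). split.
  - rewrite (pats_fsubst _ _ _ _ _ Hs Hps0 Hps). apply map_nth_error; auto.
  - assert (Ec : concl_at D' (p ++ lpos l ++ t ++ [i])
                 = concl_at (tinst T (leaf_subst l)) (t ++ [i]))
      by (unfold concl_at; rewrite reduct_leaf; auto).
    rewrite <- !app_assoc, Ec, concl_at_tinst, subst_at_snoc, E0. apply perm_witness_map.
    unfold concl_at, T, sub in *; rewrite <- !app_assoc in *; auto.
Qed.

Lemma local_ok_thread_witness W ch : (forall q, local_ok D q (W q)) ->
  (forall q i, premise_witness D' q i (ch q i)) ->
  forall q, local_ok D' q (thread_witness L p W ch q).
Proof.
  intros HW Hch q. unfold local_ok.
  destruct (D' q) as [[r G]|] eqn:Eq; auto. intros i ps Hps Hi. unfold thread_witness.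
  destruct (leaf_on L p q) as [l|] eqn:Eon.
  - destruct (leaf_on_Some _ _ _ _ Eon) as [Hl [t ->]].
    rewrite app_assoc, skipn_app, skipn_all, Nat.sub_diag, skipn_0, <- app_assoc.
    replace ((p ++ lpos l) ++ t ++ [i]) with ((p ++ lpos l ++ t) ++ [i])
      by (rewrite !app_assoc; auto).
    apply (local_ok_leaf W l t i r G); auto.
  - destruct (prefixb p (q ++ [i])) eqn:Epb; [apply (Hch q i r G ps Eq Hps Hi)|].
    assert (Napart : forall r', q ++ [i] <> p ++ r')
      by (intros r' E; assert (prefixb p (q ++ [i]) = true) by (apply prefixb_spec; eauto);
          congruence).
    rewrite outside in Eq by (apply (not_prefix_app p q i); auto).
    specialize (HW q). unfold local_ok in HW. rewrite Eq in HW.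
    destruct (HW i ps Hps Hi) as [pat [Hpat Hpw]]. exists pat; split; auto.
    unfold concl_at. rewrite outside by auto. exact Hpw.
Qed.

Lemma progressing_step : progressing D -> progressing D'.
Proof.
  intros [W [HW Hthread]].
  assert (Hch : forall q i, {w | premise_witness D' q i w})
    by (intros; apply constructive_indefinite_description, premise_witness_exists; auto).
  set (ch := fun q i => proj1_sig (Hch q i)).
  exists (thread_witness L p W ch). split.
  { apply local_ok_thread_witness; auto. intros q i; exact (proj2_sig (Hch q i)). }
  intros b Hb. destruct (reduct_branch_image W ch b Hb) as (b0 & k & k' & Himg & HWimg).
  destruct (Hthread b0) as [n0 [f Hf]].
  { eapply infbranch_image; eauto using coderiv_prefix_closed. }
  exists (k' + n0), (fun n => f (n - k' + k)). eapply progressing_thread_image; eauto.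
Qed.

End CutStep.

Lemma cut_step_preserves D D' : cut_step D D' ->
  (weakly_regular D -> weakly_regular D') /\ (regular D -> regular D') /\
  (finitely_expandable D -> finitely_expandable D') /\ (progressing D -> progressing D').
Proof.
  intros Hs. destruct (cut_step_frontier D D' Hs) as (p & H & L & HD & HD' & Hout & Hbelow).
  repeat split; eauto using weakly_regular_step, regular_step, finitely_expandable_step,
    progressing_step.
Qed.

Theorem mainTheorem4 :
  (forall D D' : tree, cut_step D D' ->
     (weakly_regular D -> weakly_regular D') /\
     (regular D -> regular D') /\
     (finitely_expandable D -> finitely_expandable D')) /\
  (forall D D' : tree, cut_step D D' ->
     (rPLL D -> rPLL D') /\ (wrPLL D -> wrPLL D')).
Proof.
  split; intros D D' Hs;
    destruct (cut_step_preserves D D' Hs) as (Hwr & Hr & Hfe & Hprog); [tauto|].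
  assert (HD' : coderiv D') by apply Hs.
  unfold rPLL, wrPLL. tauto.
Qed.
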